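(* If $\rho$ is a function quasi-norm over a $\sigma$-finite measure space $(\Omega,\Sigma,\mu)$ with the weak Fatou property, then $\rho$ has the rough Fatou property.
   Context: $L_0^+(\mu)$: measurable functions $\Omega\to[0,\infty]$ modulo a.e. equality. A function quasi-norm is $\rho\colon L_0^+(\mu)\to[0,\infty]$ with (F1) $\rho(tf)=t\rho(f)$, $t\ge0$; (F2) $f\le g$ a.e. $\Rightarrow\rho(f)\le\rho(g)$; (F3) $\rho(\chi_E)<\infty$ if $\mu(E)<\infty$; (F4) for all $E$ with $\mu(E)<\infty$ and $\varepsilon>0$ there is $\delta>0$ with $\mu(A)\le\varepsilon$ whenever $A\subseteq E$ is measurable with $\rho(\chi_A)\le\delta$; (F5) $\rho(f+g)\le\kappa(\rho(f)+\rho(g))$ for a constant $\kappa$. $\rho$ has the rough Fatou property if there is a constant $C$ with $\rho(\lim_nf_n)\le C\lim_n\rho(f_n)$ for every non-decreasing sequence $(f_n)$ in $L_0^+(\mu)$; it has the weak Fatou property if $\rho(\lim_nf_n)<\infty$ whenever $(f_n)$ is non-decreasing in $L_0^+(\mu)$ with $\lim_n\rho(f_n)<\infty$. *)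

From HB Require Import structures.
From mathcomp Require Import all_boot all_order all_algebra.
From mathcomp Require Import all_classical all_reals all_analysis measurable_realfun.
Set Implicit Arguments. Unset Strict Implicit. Unset Printing Implicit Defensive.
Import Order.TTheory GRing.Theory Num.Theory.
Local Open Scope classical_set_scope.
Local Open Scope ring_scope.
Local Open Scope ereal_scope.

(* Quotienting by a.e. equality is encoded by requiring rho to be
   monotone w.r.t. the a.e. order (axiom F2), which forces rho to be
   invariant under a.e. equality. *)
Definition L0p d (T : measurableType d) (R : realType) (f : T -> \bar R) : Prop :=
  measurable_fun [set: T] f /\ (forall x, 0 <= f x).

Definition indic_e d (T : measurableType d) (R : realType) (E : set T) : T -> \bar R :=
  fun x => (\1_E x)%:E.

Definition function_quasi_norm d (T : measurableType d) (R : realType)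
    (mu : {measure set T -> \bar R}) (rho : (T -> \bar R) -> \bar R) : Prop :=
  (forall f, L0p f -> 0 <= rho f) /\
  (forall (t : R) f, (0 <= t)%R -> L0p f ->
     rho (fun x => t%:E * f x) = t%:E * rho f) /\
  (forall f g, L0p f -> L0p g -> {ae mu, forall x, f x <= g x} -> rho f <= rho g) /\
  (forall E, measurable E -> mu E < +oo -> rho (indic_e R E) < +oo) /\
  (forall E (eps : R), measurable E -> mu E < +oo -> (0 < eps)%R ->
     exists2 delta : R, (0 < delta)%R &
       forall A, measurable A -> A `<=` E -> rho (indic_e R A) <= delta%:E ->
         mu A <= eps%:E) /\
  (exists kappa : R, forall f g, L0p f -> L0p g ->
     rho (fun x => f x + g x) <= kappa%:E * (rho f + rho g)).

Definition L0p_nondecr d (T : measurableType d) (R : realType)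
    (mu : {measure set T -> \bar R}) (f : nat -> T -> \bar R) : Prop :=
  (forall n, L0p (f n)) /\ (forall n, {ae mu, forall x, f n x <= f n.+1 x}).

(* Its limit in L_0^+(mu): the pointwise supremum (a.e. equal to the
   pointwise limit). *)
Definition seq_lim d (T : measurableType d) (R : realType)
    (f : nat -> T -> \bar R) : T -> \bar R :=
  fun x => ereal_sup (range (fun n => f n x)).

Definition rough_Fatou d (T : measurableType d) (R : realType)
    (mu : {measure set T -> \bar R}) (rho : (T -> \bar R) -> \bar R) : Prop :=
  exists2 C : R, (0 < C)%R &
    forall f, L0p_nondecr mu f ->
      rho (seq_lim f) <= C%:E * limn (fun n => rho (f n)).

Definition weak_Fatou d (T : measurableType d) (R : realType)
    (mu : {measure set T -> \bar R}) (rho : (T -> \bar R) -> \bar R) : Prop :=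
  forall f, L0p_nondecr mu f ->
    limn (fun n => rho (f n)) < +oo -> rho (seq_lim f) < +oo.

From mathcomp Require Import all_boot all_order all_algebra.
From mathcomp Require Import all_classical all_reals all_analysis measurable_realfun.
From mathcomp Require Import ring lra.
Set Implicit Arguments. Unset Strict Implicit. Unset Printing Implicit Defensive.
Import Order.TTheory GRing.Theory Num.Theory.
Local Open Scope classical_set_scope.
Local Open Scope ring_scope.
Local Open Scope ereal_scope.

(* If the rough Fatou property fails, then for every n a failing sequence can be
   rescaled into a nondecreasing sequence f_n whose terms have norm at most
   (2k)^-n while its supremum has norm at least n.  The diagonal sums
   h_q = f_0^q + f_1^(q-1) + ... + f_q^0 increase with q, and the geometric decay
   of the norms absorbs the quasi-triangle constant k, so rho(h_q) <= 2k.  The weak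
   Fatou property then makes rho(sup h) finite, although sup h dominates every
   sup f_n. *)

Lemma rescale_strict_gap (R : realType) (C : R) (L S : \bar R) :
  (0 < C)%R -> 0 <= L -> C%:E * L < S ->
  exists2 c : R, (0 < c)%R & c%:E * L <= 1 /\ C%:E <= c%:E * S.
Proof.
move=> C0; case: L => [l| |]; rewrite ?lee_fin //; last first.
  by move=> _; rewrite gt0_muley ?lte_fin // ltNge leey.
move=> l0; case: S => [s| |] //; last first.
- have l1 : (0 < l + 1)%R by lra.
  move=> _; exists (l + 1)^-1%R; first by rewrite invr_gt0.
  rewrite gt0_muley ?lte_fin ?invr_gt0 // leey; split=> //.
  by rewrite -EFinM lee_fin mulrC ler_pdivrMr // mul1r; lra.
- rewrite -EFinM lte_fin => Cls.
  have s0 : (0 < s)%R by apply: le_lt_trans Cls; rewrite mulr_ge0 // ltW.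
  exists (C / s)%R; first exact: divr_gt0.
  rewrite -!EFinM !lee_fin divfK ?gt_eqF //; split=> //.
  by rewrite mulrAC ler_pdivrMr // mul1r ltW.
Qed.

Section L0p_facts.
Context {d} {T : measurableType d} {R : realType}.
Implicit Types (f : T -> \bar R) (F : nat -> T -> \bar R).

Lemma L0p0 : L0p (fun _ : T => 0 : \bar R).
Proof. by split => //; exact: measurable_cst. Qed.

Lemma L0pZ (c : R) f : (0 <= c)%R -> L0p f -> L0p (fun x => c%:E * f x).
Proof.
move=> c0 [mf f0]; split; first exact: emeasurable_funM.
by move=> x; rewrite mule_ge0.
Qed.

Lemma L0p_sum (I : Type) (s : seq I) (a : I -> T -> \bar R) :
  (forall i, L0p (a i)) -> L0p (fun x => \sum_(i <- s) a i x).
Proof.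
move=> La; split; first by apply: emeasurable_sum => i; exact: (La i).1.
by move=> x; apply: sume_ge0 => i _; exact: (La i).2.
Qed.

Lemma seq_lim_ub F n x : F n x <= seq_lim F x.
Proof. by apply: ereal_sup_ubound; exists n. Qed.

Lemma measurable_seq_lim F :
  (forall n, measurable_fun setT (F n)) -> measurable_fun setT (seq_lim F).
Proof.
move=> mF; rewrite (_ : seq_lim F = fun x => esups (F^~ x) 0%N).
  exact: measurable_fun_esups.
apply/funext => x; rewrite /esups /sdrop /seq_lim /=.
by congr ereal_sup; apply/seteqP; split => y [n _ <-]; exists n.
Qed.

Lemma L0p_seq_lim F : (forall n, L0p (F n)) -> L0p (seq_lim F).
Proof.
move=> LF; split; first by apply: measurable_seq_lim => n; exact: (LF n).1.
by move=> x; apply: le_trans (seq_lim_ub F 0 x); exact: (LF 0%N).2.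
Qed.

Lemma seq_limZ (c : R) F : (0 < c)%R ->
  seq_lim (fun n x => c%:E * F n x) = fun x => c%:E * seq_lim F x.
Proof. by move=> c0; apply/funext => x; rewrite /seq_lim -ereal_sup_pZl // image_comp. Qed.

Lemma L0p_nondecrZ (mu : {measure set T -> \bar R}) (c : R) F :
  (0 <= c)%R -> L0p_nondecr mu F -> L0p_nondecr mu (fun n x => c%:E * F n x).
Proof.
move=> c0 [LF FS]; split => [n|n]; first exact: L0pZ.
by apply: filterS (FS n) => x; apply: lee_wpmul2l; rewrite lee_fin.
Qed.

Definition diagonal_sum (F : nat -> nat -> T -> \bar R) (q : nat) (x : T) :=
  \sum_(0 <= m < q.+1) F m (q - m)%N x.

Lemma L0p_nondecr_diagonal_sum (mu : {measure set T -> \bar R})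
    (F : nat -> nat -> T -> \bar R) :
  (forall m, L0p_nondecr mu (F m)) -> L0p_nondecr mu (diagonal_sum F).
Proof.
move=> LF; split=> [q|q]; first by apply: L0p_sum => m; exact: (LF m).1.
have FS : \forall x \ae mu, forall m j, F m j x <= F m j.+1 x.
  by apply: ae_foralln => m; apply: ae_foralln => j; exact: (LF m).2.
apply: filterS FS => x FS; rewrite /diagonal_sum [leRHS]big_nat_recr //=.
apply: le_trans (leeDl _ _); last exact: ((LF _).1 _).2.
rewrite big_nat_cond [leRHS]big_nat_cond; apply: lee_sum => m /andP[/andP[_ mq] _].
by rewrite subSn.
Qed.

Lemma seq_lim_le_diagonal_sum (F : nat -> nat -> T -> \bar R) m x :
  (forall m j, L0p (F m j)) -> seq_lim (F m) x <= seq_lim (diagonal_sum F) x.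
Proof.
move=> LF; apply: ge_ereal_sup => _ [j _ <-].
apply: le_trans (seq_lim_ub _ (m + j) x).
rewrite /diagonal_sum (bigD1_seq m) ?iota_uniq ?mem_index_iota ?ltnS ?leq_addr //=.
by rewrite addKn leeDl // sume_ge0 // => i _; exact: (LF _ _).2.
Qed.

End L0p_facts.

Section weak_to_rough_Fatou.
Context d (T : measurableType d) (R : realType) (mu : {measure set T -> \bar R}).
Variables (rho : (T -> \bar R) -> \bar R) (kappa : R).
Hypothesis rho_ge0 : forall f, L0p f -> 0 <= rho f.
Hypothesis rhoZ : forall (t : R) f, (0 <= t)%R -> L0p f ->
  rho (fun x => t%:E * f x) = t%:E * rho f.
Hypothesis rho_le_ae : forall f g, L0p f -> L0p g ->
  {ae mu, forall x, f x <= g x} -> rho f <= rho g.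
Hypothesis rhoD : forall f g, L0p f -> L0p g ->
  rho (fun x => f x + g x) <= kappa%:E * (rho f + rho g).

Let k := Num.max kappa 1%R.

Let k_ge1 : (1 <= k)%R. Proof. by rewrite le_max lexx orbT. Qed.

Let two_k_gt0 : (0 < 2 * k)%R. Proof. by have := k_ge1; lra. Qed.

Lemma rho0 : rho (fun _ => 0) = 0.
Proof. by have := rhoZ (lexx 0%R) L0p0; rewrite !mul0e. Qed.

Lemma rhoD_le f g : L0p f -> L0p g ->
  rho (fun x => f x + g x) <= k%:E * (rho f + rho g).
Proof.
move=> Lf Lg; apply: le_trans (rhoD Lf Lg) _.
by rewrite lee_wpmul2r ?adde_ge0 ?rho_ge0 // lee_fin le_max lexx.
Qed.

(* The factor 2k per term absorbs the constant k lost at each use of rhoD_le. *)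
Lemma rho_sum_le_geometric N (r : R) (a : nat -> T -> \bar R) :
  (0 <= r)%R -> (forall n, L0p (a n)) ->
  (forall n, rho (a n) <= (r / (2 * k) ^+ n)%:E) ->
  rho (fun x => \sum_(0 <= n < N) a n x) <= (2 * k * r)%:E.
Proof.
elim: N r a => [|N IH] r a r0 La rho_a.
  under eq_fun do rewrite big_geq //.
  by rewrite rho0 lee_fin mulr_ge0 // ltW.
under eq_fun do rewrite big_nat_recl //.
have rho_tail : rho (fun x => \sum_(0 <= n < N) a n.+1 x) <= r%:E.
  rewrite [r in r%:E](_ : r = 2 * k * (r / (2 * k)))%R; last first.
    by rewrite mulrCA mulfV ?mulr1 ?lt0r_neq0.
  apply: IH => [|n|n]; [by rewrite divr_ge0 // ltW | exact: La |].
  by apply: le_trans (rho_a n.+1) _; rewrite lee_fin exprS invfM mulrA.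
apply: le_trans (rhoD_le (La 0%N) (L0p_sum _ (fun n => La n.+1))) _.
apply: le_trans (_ : k%:E * (r%:E + r%:E) <= _).
  rewrite lee_wpmul2l ?lee_fin ?(le_trans ler01 k_ge1) // leeD //.
  by apply: le_trans (rho_a 0%N) _; rewrite expr0 divr1.
by rewrite -EFinD -EFinM lee_fin (_ : k * (r + r) = 2 * k * r)%R //; ring.
Qed.

Lemma limn_rho_nondecr f : L0p_nondecr mu f ->
  limn (fun n => rho (f n)) = ereal_sup (range (fun n => rho (f n))).
Proof.
move=> [Lf f_nd]; apply/cvg_lim => //; apply: ereal_nondecreasing_cvgn.
by apply/nondecreasing_seqP => n; exact: rho_le_ae.
Qed.

Lemma not_rough_Fatou_small_terms_large_lim : ~ rough_Fatou mu rho ->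
  forall eps M : R, (0 < eps)%R -> exists f, L0p_nondecr mu f /\
    (forall j, rho (f j) <= eps%:E) /\ M%:E <= rho (seq_lim f).
Proof.
move=> not_rough eps M eps0.
(* A counterexample for the constant C, rescaled to have norms at most eps. *)
pose C := ((`|M| + 1) / eps)%R.
have C0 : (0 < C)%R by rewrite divr_gt0 // ltr_pwDr.
have [f [Lf f_gap]] : exists f, L0p_nondecr mu f /\
    C%:E * limn (fun n => rho (f n)) < rho (seq_lim f).
  apply: contrapT => no_gap; apply: not_rough; exists C => // f Lf.
  by rewrite leNgt; apply/negP => gap; apply: no_gap; exists f.
have rho_le_lim j : rho (f j) <= limn (fun n => rho (f n)).
  by rewrite limn_rho_nondecr //; apply: ereal_sup_ubound; exists j.
have lim_ge0 : 0 <= limn (fun n => rho (f n)).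
  exact: le_trans (rho_ge0 (Lf.1 0%N)) (rho_le_lim 0%N).
have [c c0 [c_lim C_le]] := rescale_strict_gap C0 lim_ge0 f_gap.
have ce0 : (0 < c * eps)%R by rewrite mulr_gt0.
exists (fun n x => (c * eps)%:E * f n x); split; first exact: L0p_nondecrZ (ltW ce0) Lf.
split=> [j|].
  rewrite rhoZ ?(ltW ce0) //; last exact: Lf.1.
  rewrite mulrC EFinM -muleA.
  rewrite -[leRHS]mule1 lee_pmul2l ?lte_fin //; apply: le_trans _ c_lim.
  by rewrite lee_pmul2l ?lte_fin.
rewrite seq_limZ // rhoZ ?(ltW ce0) //; last exact: L0p_seq_lim Lf.1.
rewrite mulrC EFinM -muleA.
apply: le_trans (_ : eps%:E * C%:E <= _); last by rewrite lee_pmul2l ?lte_fin.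
by rewrite -EFinM lee_fin mulrC divfK ?gt_eqF //; apply: le_trans (ler_norm M) _; lra.
Qed.

Theorem rough_Fatou_of_weak_Fatou : weak_Fatou mu rho -> rough_Fatou mu rho.
Proof.
move=> weak; apply: contrapT => not_rough.
have [F HF] := choice (fun m => not_rough_Fatou_small_terms_large_lim not_rough
  (m%:R) (divr_gt0 ltr01 (exprn_gt0 m two_k_gt0))).
have LF m : L0p_nondecr mu (F m) by have [] := HF m.
pose h := diagonal_sum F.
have Lh : L0p_nondecr mu h := L0p_nondecr_diagonal_sum LF.
have rho_h q : rho (h q) <= (2 * k * 1)%:E.
  by apply: rho_sum_le_geometric => // m; [exact: (LF m).1 | have [_ []] := HF m].
have : rho (seq_lim h) < +oo.
  apply: weak => //; rewrite limn_rho_nondecr //.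
  apply: (@le_lt_trans _ _ (2 * k * 1)%:E); last exact: ltey.
  by apply: ge_ereal_sup => _ [q _ <-]; exact: rho_h.
have Lh_lim : L0p (seq_lim h) := L0p_seq_lim Lh.1.
rewrite -ge0_fin_numE ?(rho_ge0 Lh_lim) // => /fineK rho_h_fin.
have lim_h_ge0 : (0 <= fine (rho (seq_lim h)))%R by rewrite fine_ge0 ?(rho_ge0 Lh_lim).
pose n := Num.Def.archi_bound (fine (rho (seq_lim h))).
have : n%:R%:E <= rho (seq_lim h).
  have [_ [_ large]] := HF n; apply: le_trans large _.
  apply: rho_le_ae; [exact: L0p_seq_lim (LF n).1 | exact: Lh_lim |].
  by apply: aeW => x; apply: seq_lim_le_diagonal_sum => m; exact: (LF m).1.
by rewrite -rho_h_fin lee_fin leNgt archi_boundP.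
Qed.

End weak_to_rough_Fatou.

Theorem proposition3p15 (d : measure_display) (T : measurableType d) (R : realType)
    (mu : {measure set T -> \bar R}) (rho : (T -> \bar R) -> \bar R) :
  sigma_finite setT mu ->
  function_quasi_norm mu rho ->
  weak_Fatou mu rho ->
  rough_Fatou mu rho.
Proof.
move=> _ [rho_ge0 [rhoZ [rho_le_ae [_ [_ [kappa rhoD]]]]]].
exact: rough_Fatou_of_weak_Fatou rho_ge0 rhoZ rho_le_ae rhoD.
Qed.
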